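(* An expanding map $\varphi:X\to X$ on a compact metrizable space $X$ is topologically free if and only if $X$ has no isolated points that are periodic for $\varphi$.
   Context: Expanding: there are a compatible metric $d$ and $\varepsilon>0,\theta>1$ with $d(\varphi x,\varphi y)\ge\theta d(x,y)$ whenever $d(x,y)<\varepsilon$. Topologically free: the set $\{x:\varphi^n(x)=x$ for some $n\ge1\}$ has empty interior. *)

From Stdlib Require Import Reals List.
Open Scope R_scope.

Section Topo.
Context {X : Type}.

Definition is_metric (d : X -> X -> R) : Prop :=
  (forall x y, 0 <= d x y) /\
  (forall x y, d x y = 0 <-> x = y) /\
  (forall x y, d x y = d y x) /\
  (forall x y z, d x z <= d x y + d y z).

Definition metric_open (d : X -> X -> R) (U : X -> Prop) : Prop :=
  forall x, U x -> exists r, 0 < r /\ forall y, d x y < r -> U y.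

Definition compatible_metric (opn : (X -> Prop) -> Prop) (d : X -> X -> R) : Prop :=
  is_metric d /\ forall U, opn U <-> metric_open d U.

Definition metrizable (opn : (X -> Prop) -> Prop) : Prop :=
  exists d, compatible_metric opn d.

Definition compact_space (opn : (X -> Prop) -> Prop) : Prop :=
  forall (I : Type) (U : I -> X -> Prop),
    (forall i, opn (U i)) -> (forall x, exists i, U i x) ->
    exists l : list I, forall x, exists i, In i l /\ U i x.

Definition continuous_map (opn : (X -> Prop) -> Prop) (f : X -> X) : Prop :=
  forall U, opn U -> opn (fun x => U (f x)).

Definition expanding (opn : (X -> Prop) -> Prop) (phi : X -> X) : Prop :=
  exists (d : X -> X -> R) (eps theta : R),
    compatible_metric opn d /\ 0 < eps /\ 1 < theta /\
    forall x y, d x y < eps -> theta * d x y <= d (phi x) (phi y).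

Definition periodic_pt (phi : X -> X) (x : X) : Prop :=
  exists n : nat, (1 <= n)%nat /\ Nat.iter n phi x = x.

Definition empty_interior (opn : (X -> Prop) -> Prop) (A : X -> Prop) : Prop :=
  forall U, opn U -> (forall x, U x -> A x) -> forall x, ~ U x.

Definition topologically_free (opn : (X -> Prop) -> Prop) (phi : X -> X) : Prop :=
  empty_interior opn (periodic_pt phi).

Definition isolated_pt (opn : (X -> Prop) -> Prop) (x : X) : Prop :=
  opn (fun y => y = x).

End Topo.

From Stdlib Require Import Reals List.
From Stdlib Require Import Lra Lia Classical ClassicalEpsilon.
Open Scope R_scope.

(* Let U be an open set of periodic points.  By expansivity, two
   points whose orbits stay eps-close forever coincide; so if some ball were
   pointwise fixed by phi^n, the iterates of its points near the centre would
   stay eps-close (they are periodic and the first n iterates are close by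
   continuity), and the centre would be an isolated periodic point.  Hence
   every closed set Fix(phi^n) has empty interior, and U, the union of them,
   is empty by the Baire category theorem for the compact metric space X. *)

Lemma iter_mult_fixed {A : Type} (f : A -> A) (n q : nat) (x : A) :
  Nat.iter n f x = x -> Nat.iter (n * q) f x = x.
Proof.
  intros Hx; induction q as [|q IHq]; [now rewrite Nat.mul_0_r|].
  now rewrite Nat.mul_succ_r, Nat.add_comm, Nat.iter_add, IHq.
Qed.

Lemma iter_mod_period {A : Type} (f : A -> A) (n k : nat) (x : A) :
  Nat.iter n f x = x -> Nat.iter k f x = Nat.iter (k mod n) f x.
Proof.
  intros Hx.
  replace (Nat.iter k f x) with (Nat.iter (k mod n + n * (k / n)) f x)
    by (f_equal; pose proof (Nat.div_mod_eq k n); lia).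
  now rewrite Nat.iter_add, iter_mult_fixed.
Qed.

Lemma iter_periodic_pair {A : Type} (f : A -> A) (P : A -> A -> Prop) (n : nat) (x y : A) :
  (1 <= n)%nat -> Nat.iter n f x = x -> Nat.iter n f y = y ->
  (forall j, (j < n)%nat -> P (Nat.iter j f x) (Nat.iter j f y)) ->
  forall k, P (Nat.iter k f x) (Nat.iter k f y).
Proof.
  intros Hn Hx Hy Hfirst k.
  rewrite (iter_mod_period f n k x Hx), (iter_mod_period f n k y Hy).
  apply Hfirst, Nat.mod_upper_bound; lia.
Qed.

Lemma continuous_map_iter {X : Type} (opn : (X -> Prop) -> Prop) (f : X -> X) (n : nat) :
  continuous_map opn f -> continuous_map opn (Nat.iter n f).
Proof.
  intros Hf; induction n as [|n IHn]; intros U HU; [exact HU|].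
  exact (IHn _ (Hf U HU)).
Qed.

Lemma in_le_list_max (l : list nat) (i : nat) : In i l -> (i <= list_max l)%nat.
Proof.
  intros Hi.
  exact (proj1 (Forall_forall _ l) (proj1 (list_max_le l _) (le_n _)) i Hi).
Qed.

(* Cantor's intersection theorem; closedness of [K k] is openness of its complement. *)
Lemma compact_nested_inter {X : Type} (opn : (X -> Prop) -> Prop) (K : nat -> X -> Prop) :
  compact_space opn ->
  (forall k, opn (fun x => ~ K k x)) ->
  (forall k, exists x, K k x) ->
  (forall k x, K (S k) x -> K k x) ->
  exists z, forall k, K k z.
Proof.
  intros Hcomp Hclosed Hne Hdecr.
  assert (Hmono : forall k m x, (k <= m)%nat -> K m x -> K k x).
  { intros k m x Hkm; induction Hkm; auto. }
  apply NNPP; intros Hnone.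
  destruct (Hcomp nat (fun k x => ~ K k x) Hclosed) as [l Hl].
  { intros x; apply NNPP; intros Hx; apply Hnone; exists x; intros k.
    apply NNPP; intros Hk; apply Hx; now exists k. }
  destruct (Hne (list_max l)) as [w Hw].
  destruct (Hl w) as [i [Hi Hwi]].
  exact (Hwi (Hmono i _ w (in_le_list_max l i Hi) Hw)).
Qed.

Section MetricSpace.
Context {X : Type} (opn : (X -> Prop) -> Prop) (d : X -> X -> R).
Hypothesis Hd : compatible_metric opn d.

Lemma dist_ge0 x y : 0 <= d x y.
Proof. apply (proj1 Hd). Qed.

Lemma dist_xx x : d x x = 0.
Proof. now apply (proj1 Hd). Qed.

Lemma dist_eq0 x y : d x y = 0 -> x = y.
Proof. apply (proj1 Hd). Qed.

Lemma dist_sym x y : d x y = d y x.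
Proof. apply (proj1 Hd). Qed.

Lemma dist_triangle x y z : d x z <= d x y + d y z.
Proof. apply (proj1 Hd). Qed.

Lemma dist_gt0 x y : x <> y -> 0 < d x y.
Proof.
  intros Hxy; destruct (dist_ge0 x y) as [|H0]; [easy|].
  now contradiction Hxy; apply dist_eq0.
Qed.

Lemma open_ball c r : opn (fun y => d c y < r).
Proof.
  apply (proj2 Hd); intros x Hx; exists (r - d c x); split; [lra|].
  intros y Hy; pose proof (dist_triangle c x y); lra.
Qed.

Lemma open_cball_compl c r : opn (fun y => ~ d c y <= r).
Proof.
  apply (proj2 Hd); intros x Hx; exists (d c x - r); split; [lra|].
  intros y Hy; pose proof (dist_triangle c y x); rewrite (dist_sym y x) in *; lra.
Qed.

Lemma continuous_map_metric f x e :
  continuous_map opn f -> 0 < e ->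
  exists del, 0 < del /\ forall w, d x w < del -> d (f x) (f w) < e.
Proof.
  intros Hf He.
  destruct (proj1 (proj2 Hd _) (Hf _ (open_ball (f x) e)) x) as [del Hdel].
  - cbn; rewrite dist_xx; lra.
  - now exists del.
Qed.

Lemma iter_uniformly_close f c m e :
  continuous_map opn f -> 0 < e ->
  exists del, 0 < del /\ forall w, d c w < del -> forall j, (j < m)%nat ->
    d (Nat.iter j f c) (Nat.iter j f w) < e.
Proof.
  intros Hf He; induction m as [|m [del1 [Hdel1 Hclose1]]].
  - exists 1; split; [lra|]; intros; lia.
  - destruct (continuous_map_metric (Nat.iter m f) c e (continuous_map_iter opn f m Hf) He)
      as [del2 [Hdel2 Hclose2]].
    exists (Rmin del1 del2); split; [now apply Rmin_pos|].
    intros w Hw j Hj; pose proof (Rmin_l del1 del2); pose proof (Rmin_r del1 del2).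
    destruct (Nat.eq_dec j m) as [->|]; [apply Hclose2 | apply Hclose1]; lra || lia.
Qed.

Lemma open_not_fixed f : continuous_map opn f -> opn (fun x => f x <> x).
Proof.
  intros Hf; apply (proj2 Hd); intros x Hx.
  pose proof (dist_gt0 _ _ Hx) as Hgap.
  destruct (continuous_map_metric f x (d (f x) x / 2) Hf ltac:(lra)) as [del [Hdel Hclose]].
  exists (Rmin del (d (f x) x / 2)); split; [apply Rmin_pos; lra|].
  intros w Hw Hfw.
  pose proof (Rmin_l del (d (f x) x / 2)); pose proof (Rmin_r del (d (f x) x / 2)).
  pose proof (Hclose w ltac:(lra)) as Hfxw; rewrite Hfw in Hfxw.
  pose proof (dist_triangle (f x) w x); rewrite (dist_sym w x) in *; lra.
Qed.

Section Expanding.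
Variables (phi : X -> X) (eps theta : R).
Hypotheses (Heps : 0 < eps) (Htheta : 1 < theta).
Hypothesis Hexp : forall x y, d x y < eps -> theta * d x y <= d (phi x) (phi y).

Lemma expansive x y :
  (forall k, d (Nat.iter k phi x) (Nat.iter k phi y) < eps) -> x = y.
Proof.
  intros Hclose; apply NNPP; intros Hxy.
  pose proof (dist_gt0 _ _ Hxy) as Hpos.
  assert (Hgrow : forall k, theta ^ k * d x y <= d (Nat.iter k phi x) (Nat.iter k phi y)).
  { induction k as [|k IHk]; [simpl; lra|].
    rewrite !Nat.iter_succ, <- tech_pow_Rmult.
    pose proof (Hexp _ _ (Hclose k)).
    pose proof (Rmult_le_compat_l theta _ _ ltac:(lra) IHk); lra. }
  destruct (Pow_x_infinity theta ltac:(rewrite Rabs_pos_eq; lra) (eps / d x y)) as [N HN].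
  specialize (HN N (le_n N)); rewrite Rabs_pos_eq in HN by (apply pow_le; lra).
  apply Rge_le, (Rmult_le_compat_r (d x y)) in HN; [|lra].
  unfold Rdiv in HN; rewrite Rmult_assoc, Rinv_l in HN by lra.
  specialize (Hgrow N); specialize (Hclose N); lra.
Qed.

Lemma isolated_of_fixed_ball c r n :
  continuous_map opn phi -> 0 < r -> (1 <= n)%nat ->
  (forall y, d c y < r -> Nat.iter n phi y = y) ->
  isolated_pt opn c.
Proof.
  intros Hphi Hr Hn Hfix.
  destruct (iter_uniformly_close phi c n eps Hphi Heps) as [del [Hdel Hclose]].
  apply (proj2 Hd); intros x ->; exists (Rmin del r); split; [now apply Rmin_pos|].
  intros y Hy; pose proof (Rmin_l del r); pose proof (Rmin_r del r).
  symmetry; apply expansive.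
  apply (iter_periodic_pair phi (fun a b => d a b < eps) n); auto.
  - apply Hfix; rewrite dist_xx; lra.
  - apply Hfix; lra.
  - apply Hclose; lra.
Qed.

End Expanding.

Lemma cball_in_ball_avoiding (F : X -> Prop) c r :
  opn (fun x => ~ F x) -> empty_interior opn F -> 0 < r ->
  exists y s, 0 < s /\ forall w, d y w <= s -> d c w < r /\ ~ F w.
Proof.
  intros Hclosed Hthin Hr.
  assert (Hopen : opn (fun y => d c y < r /\ ~ F y)).
  { apply (proj2 Hd); intros y [Hy HFy].
    destruct (proj1 (proj2 Hd _) (open_ball c r) y Hy) as [s1 [Hs1 H1]].
    destruct (proj1 (proj2 Hd _) Hclosed y HFy) as [s2 [Hs2 H2]].
    exists (Rmin s1 s2); split; [now apply Rmin_pos|].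
    intros w Hw; pose proof (Rmin_l s1 s2); pose proof (Rmin_r s1 s2).
    split; [apply H1 | apply H2]; lra. }
  assert (Hexists : exists y, d c y < r /\ ~ F y).
  { apply NNPP; intros Hnone.
    apply (Hthin (fun y => d c y < r) (open_ball c r)) with c.
    - intros y Hy; apply NNPP; intros HFy; apply Hnone; now exists y.
    - rewrite dist_xx; lra. }
  destruct Hexists as [y Hy].
  destruct (proj1 (proj2 Hd _) Hopen y Hy) as [s [Hs Hsub]].
  exists y, (s / 2); split; [lra|]; intros w Hw; apply Hsub; lra.
Qed.

(* Baire category theorem, the closed sets being given by open complements. *)
Lemma baire_compact (F : nat -> X -> Prop) :
  compact_space opn ->
  (forall n, opn (fun x => ~ F n x)) ->
  (forall n, empty_interior opn (F n)) ->
  empty_interior opn (fun x => exists n, F n x).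
Proof.
  intros Hcomp Hclosed Hthin U HU HUF x0 Hx0.
  assert (Hshrink : forall (np : nat * (X * R)), exists q : X * R,
             0 < snd (snd np) -> 0 < snd q /\
             forall y, d (fst q) y <= snd q ->
               d (fst (snd np)) y < snd (snd np) /\ ~ F (fst np) y).
  { intros [n [c r]]; cbn.
    destruct (Rlt_dec 0 r) as [Hr|Hr]; [|now exists (c, r)].
    destruct (cball_in_ball_avoiding (F n) c r (Hclosed n) (Hthin n) Hr) as [y [s Hys]].
    now exists (y, s). }
  destruct (choice _ Hshrink) as [shrink Hshrink'].
  destruct (proj1 (proj2 Hd _) HU x0 Hx0) as [r0 [Hr0 Hball0]].
  pose (ball := fix ball k := match k with O => (x0, r0) | S k => shrink (k, ball k) end).
  assert (Hpos : forall k, 0 < snd (ball k)).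
  { induction k as [|k IHk]; [exact Hr0|]; exact (proj1 (Hshrink' (k, ball k) IHk)). }
  pose proof (fun k => proj2 (Hshrink' (k, ball k) (Hpos k))) as Hnested; cbn in Hnested.
  destruct (compact_nested_inter opn (fun k y => d (fst (ball k)) y <= snd (ball k)))
    as [z Hz]; auto.
  - intros k; apply open_cball_compl.
  - intros k; exists (fst (ball k)); rewrite dist_xx; now apply Rlt_le.
  - intros k y Hy; apply Rlt_le, (Hnested k y Hy).
  - destruct (HUF z) as [n HFn].
    + apply Hball0, (Hnested 0%nat z (Hz 1%nat)).
    + exact (proj2 (Hnested n z (Hz (S n))) HFn).
Qed.

End MetricSpace.

Theorem mainTheorem19 (X : Type) (opn : (X -> Prop) -> Prop) (phi : X -> X) :
  metrizable opn -> compact_space opn ->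
  continuous_map opn phi -> expanding opn phi ->
  (topologically_free opn phi <->
   ~ (exists x : X, isolated_pt opn x /\ periodic_pt phi x)).
Proof.
  intros _ Hcomp Hphi [d [eps [theta [Hd [Heps [Htheta Hexp]]]]]]; split.
  - intros Hfree [x [Hiso Hper]].
    apply (Hfree _ Hiso) with x; [intros y ->; exact Hper | reflexivity].
  - intros Hno U HU HUper.
    assert (Hclosed : forall n, opn (fun x => ~ Nat.iter (S n) phi x = x)).
    { intros n; exact (open_not_fixed opn d Hd _ (continuous_map_iter opn phi (S n) Hphi)). }
    assert (Hthin : forall n, empty_interior opn (fun x => Nat.iter (S n) phi x = x)).
    { intros n V HV HVfix c Hc.
      destruct (proj1 (proj2 Hd _) HV c Hc) as [r [Hr Hball]].
      apply Hno; exists c; split.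
      - apply (isolated_of_fixed_ball opn d Hd phi eps theta Heps Htheta Hexp c r (S n));
          auto; lia.
      - exists (S n); split; [lia | apply HVfix, Hc]. }
    apply (baire_compact opn d Hd _ Hcomp Hclosed Hthin U HU).
    intros x Hx; destruct (HUper x Hx) as [[|n] [Hn Hfix]]; [lia|]; now exists n.
Qed.
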